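(* Let $c\in\mathbb{Q}$ and, for $n\ge1$, $\psi_n^{(c)}=R_y\phi_{n-1}^{(c)}R_x$. Then $\psi_1^{(c)}=R_{xy}$ and for $n\ge2$, $$\psi_n^{(c)}=\frac{1}{n-1}\Bigl([\theta^{(c)},\psi_{n-1}^{(c)}]-\tfrac12\bigl(R_z\psi_{n-1}^{(c)}+\psi_{n-1}^{(c)}R_z\bigr)-c\,\psi_{n-1}^{(c)}\partial_1\Bigr).$$
   Context: Let $\mathfrak{H}=\mathbb{Q}\langle x,y\rangle$, $z=x+y$. Products of operators denote composition, $[A,B]=AB-BA$. $R_w(w')=w'w$ (right multiplication). $H$ is the $\mathbb{Q}$-linear map with $H(w)=\deg(w)w$ for words $w$. $\partial_1$ is the derivation with $\partial_1(x)=xy$, $\partial_1(y)=-xy$. For $c\in\mathbb{Q}$, $\theta^{(c)}$ is the unique $\mathbb{Q}$-linear map with $\theta^{(c)}(x)=\frac12(xz+zx)$, $\theta^{(c)}(y)=\frac12(yz+zy)$ and $\theta^{(c)}(ww')=\theta^{(c)}(w)w'+w\theta^{(c)}(w')+c\,\partial_1(w)H(w')$. The operators $\phi_n^{(c)}$ ($n\ge0$) are defined by $\phi_0^{(c)}=\mathrm{id}_{\mathfrak{H}}$ and $\phi_n^{(c)}=\frac1n\bigl([\theta^{(c)},\phi_{n-1}^{(c)}]+\frac12(R_z\phi_{n-1}^{(c)}+\phi_{n-1}^{(c)}R_z)+c\,\partial_1\phi_{n-1}^{(c)}\bigr)$ for $n\ge1$. *)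

(* The free algebra Q<x,y> is represented by formal finite
   linear combinations of words; two representations denote the same element
   iff all their coefficients agree (see [coef], [opeq]). *)
From HB Require Import structures.
From mathcomp Require Import all_boot all_order all_algebra.
Set Implicit Arguments. Unset Strict Implicit. Unset Printing Implicit Defensive.
Import Order.TTheory GRing.Theory Num.Theory.
Local Open Scope ring_scope.

Definition letter := bool.
Definition lx : letter := false.
Definition ly : letter := true.
Definition word := seq letter.

Definition hQ := seq (rat * word).

Definition coef (p : hQ) (w : word) : rat := \sum_(t <- p | t.2 == w) t.1.

Definition heq (p q : hQ) : Prop := forall w, coef p w = coef q w.

Definition hword (w : word) : hQ := [:: (1, w)].
Definition hadd (p q : hQ) : hQ := p ++ q.
Definition hscale (a : rat) (p : hQ) : hQ := [seq (a * t.1, t.2) | t <- p].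
Definition hsub (p q : hQ) : hQ := hadd p (hscale (-1) q).
Definition hmul (p q : hQ) : hQ :=
  [seq (t.1 * s.1, t.2 ++ s.2) | t <- p, s <- q].

Definition hz : hQ := hadd (hword [:: lx]) (hword [:: ly]).

Definition op := hQ -> hQ.
Definition opeq (A B : op) : Prop := forall p, heq (A p) (B p).

Definition linext (f : word -> hQ) : op :=
  fun p => flatten [seq hscale t.1 (f t.2) | t <- p].

Definition opcomp (A B : op) : op := fun p => A (B p).
Definition opadd (A B : op) : op := fun p => hadd (A p) (B p).
Definition opsub (A B : op) : op := fun p => hsub (A p) (B p).
Definition opscale (a : rat) (A : op) : op := fun p => hscale a (A p).
Definition opbr (A B : op) : op := opsub (opcomp A B) (opcomp B A).
Definition opid : op := fun p => p.

Definition Rmul (q : hQ) : op := fun p => hmul p q.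

Definition Hw (w : word) : hQ := [:: ((size w)%:R, w)].
Definition Hop : op := linext Hw.

Definition d1letter (a : letter) : hQ :=
  if a then [:: (-1, [:: lx; ly])] else [:: (1, [:: lx; ly])].
Fixpoint d1w (w : word) : hQ :=
  match w with
  | [::] => [::]
  | a :: u => hadd (hmul (d1letter a) (hword u)) (hmul (hword [:: a]) (d1w u))
  end.
Definition d1 : op := linext d1w.

Definition thletter (a : letter) : hQ :=
  hscale (2%:R)^-1 (hadd (hmul (hword [:: a]) hz) (hmul hz (hword [:: a]))).
Fixpoint thw (c : rat) (w : word) : hQ :=
  match w with
  | [::] => [::]
  | a :: u => hadd (hmul (thletter a) (hword u))
               (hadd (hmul (hword [:: a]) (thw c u))
                     (hscale c (hmul (d1letter a) (Hw u))))
  end.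
Definition theta (c : rat) : op := linext (thw c).

Fixpoint phi (c : rat) (n : nat) : op :=
  match n with
  | 0%N => opid
  | m.+1 => opscale (m.+1%:R)^-1
      (opadd (opbr (theta c) (phi c m))
        (opadd (opscale (2%:R)^-1 (opadd (opcomp (Rmul hz) (phi c m))
                                          (opcomp (phi c m) (Rmul hz))))
               (opscale c (opcomp d1 (phi c m)))))
  end.

Definition psi (c : rat) (n : nat) : op :=
  opcomp (Rmul (hword [:: ly])) (opcomp (phi c n.-1) (Rmul (hword [:: lx]))).

(* The proof is
   operator algebra driven by one commutation rule: for a letter a,
     theta R_a = R_a theta + 1/2 (R_z R_a + R_a R_z) + c R_a d1,
   i.e. theta(p a) = theta(p) a + 1/2 (p a z + p z a) + c d1(p) a.
   Conjugating the recursion phi_n = (1/n)(phi_step phi_(n-1)) by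
   A |-> R_y A R_x with this rule (applied for a = x and a = y) turns
   phi_step into the step of the psi-recursion, for every linear A. *)
From Stdlib Require Import Setoid Morphisms.
From HB Require Import structures.
From mathcomp Require Import all_boot all_order all_algebra.
From mathcomp Require Import ring.
Import Order.TTheory GRing.Theory Num.Theory.
Local Open Scope ring_scope.

Lemma coef_hnil w : coef [::] w = 0.
Proof. by rewrite /coef big_nil. Qed.

Lemma coef_hcons t p w : coef (t :: p) w = (if t.2 == w then t.1 else 0) + coef p w.
Proof. by rewrite /coef big_cons; case: ifP; rewrite ?add0r. Qed.

Lemma coef_hadd p q w : coef (hadd p q) w = coef p w + coef q w.
Proof. by rewrite /coef big_cat. Qed.

Lemma coef_hscale a p w : coef (hscale a p) w = a * coef p w.
Proof. by rewrite /coef /hscale big_map mulr_sumr. Qed.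

Lemma coef_hword u w : coef (hword u) w = if u == w then 1 else 0.
Proof. by rewrite coef_hcons coef_hnil addr0. Qed.

Lemma coef_linext f p w : coef (linext f p) w = \sum_(t <- p) t.1 * coef (f t.2) w.
Proof.
elim: p => [|t p IH]; first by rewrite big_nil; exact: coef_hnil.
by rewrite big_cons -IH -coef_hscale -coef_hadd.
Qed.

Lemma coef_hmul p r w :
  coef (hmul p r) w =
  \sum_(t <- p) t.1 * \sum_(s <- r) s.1 * (if t.2 ++ s.2 == w then 1 else 0).
Proof.
elim: p => [|t p IH]; first by rewrite big_nil; exact: coef_hnil.
rewrite big_cons -IH.
have -> : hmul (t :: p) r = hadd [seq (t.1 * s.1, t.2 ++ s.2) | s <- r] (hmul p r) by [].
rewrite coef_hadd; congr (_ + _).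
rewrite /coef big_map big_mkcond mulr_sumr.
by apply: eq_bigr => s _ /=; case: ifP => _; rewrite ?mulr1 ?mulr0 ?mulrA.
Qed.

Lemma sum_terms_coef (p : hQ) (g : word -> rat) (s : seq word) :
  uniq s -> {subset map snd p <= s} ->
  \sum_(t <- p) t.1 * g t.2 = \sum_(u <- s) coef p u * g u.
Proof.
move=> uniq_s; elim: p => [|t p IH] sub_s.
  by rewrite big_nil big1 // => u _; rewrite coef_hnil mul0r.
have t_in_s : t.2 \in s by apply: sub_s; rewrite inE eqxx.
rewrite big_cons IH; last by move=> u u_p; apply: sub_s; rewrite inE u_p orbT.
under [RHS]eq_bigr => u _ do rewrite coef_hcons mulrDl.
rewrite big_split /=; congr (_ + _).
rewrite (bigD1_seq t.2) //= eqxx big1 ?addr0 // => u /negbTE ne_u.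
by rewrite eq_sym ne_u mul0r.
Qed.

Lemma heq_sum p q (g : word -> rat) : heq p q ->
  \sum_(t <- p) t.1 * g t.2 = \sum_(t <- q) t.1 * g t.2.
Proof.
set s := undup (map snd p ++ map snd q) => pq.
have uniq_s : uniq s by exact: undup_uniq.
rewrite (@sum_terms_coef _ g _ uniq_s) => [|u u_p]; last by rewrite mem_undup mem_cat u_p.
rewrite (@sum_terms_coef _ g _ uniq_s) => [|u u_q]; last by rewrite mem_undup mem_cat u_q orbT.
by apply: eq_bigr => u _; rewrite pq.
Qed.

#[export] Instance heq_equiv : Equivalence heq.
Proof.
split=> [p w // | p q pq w | p q r pq qr w]; first by rewrite pq.
by rewrite pq qr.
Qed.

#[export] Instance hadd_proper : Proper (heq ==> heq ==> heq) hadd.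
Proof. by move=> p p' pp' q q' qq' w; rewrite !coef_hadd pp' qq'. Qed.

#[export] Instance hscale_proper : Proper (eq ==> heq ==> heq) hscale.
Proof. by move=> a _ <- q q' qq' w; rewrite !coef_hscale qq'. Qed.

#[export] Instance hmul_proper : Proper (heq ==> heq ==> heq) hmul.
Proof.
move=> p p' pp' r r' rr' w; rewrite !coef_hmul.
rewrite (heq_sum _ _ (fun u => \sum_(s <- r) s.1 * (if u ++ s.2 == w then 1 else 0)) pp').
apply: eq_bigr => t _; congr (_ * _).
exact: (heq_sum _ _ (fun v => if t.2 ++ v == w then 1 else 0) rr').
Qed.

#[export] Instance linext_proper f : Proper (heq ==> heq) (linext f).
Proof. by move=> p q pq w; rewrite !coef_linext (heq_sum _ _ (fun u => coef (f u) w) pq). Qed.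

Lemma linext_ext f g p : (forall u, heq (f u) (g u)) -> heq (linext f p) (linext g p).
Proof. by move=> fg w; rewrite !coef_linext; apply: eq_bigr => t _; rewrite fg. Qed.

Lemma linext_hword f u : heq (linext f (hword u)) (f u).
Proof. by move=> w; rewrite coef_linext big_seq1 mul1r. Qed.

Lemma hQ_as_sum p : heq p (linext hword p).
Proof.
move=> w; rewrite coef_linext; under [RHS]eq_bigr => t _ do rewrite coef_hword.
rewrite /coef big_mkcond; apply: eq_bigr => t _.
by case: eqP; rewrite ?mulr1 ?mulr0.
Qed.

Lemma hmul_add_l p q r : hmul (hadd p q) r = hadd (hmul p r) (hmul q r).
Proof. by rewrite /hmul /hadd allpairs_cat. Qed.

Lemma hmul_scale_l a p r : hmul (hscale a p) r = hscale a (hmul p r).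
Proof.
rewrite /hmul /hscale allpairs_mapl map_allpairs.
by apply: eq_allpairs => t s /=; rewrite mulrA.
Qed.

Lemma hmul_add_r p q r : heq (hmul p (hadd q r)) (hadd (hmul p q) (hmul p r)).
Proof.
move=> w; rewrite coef_hadd !coef_hmul -big_split; apply: eq_bigr => t _ /=.
by rewrite big_cat mulrDr.
Qed.

Lemma hmul_scale_r p a q : heq (hmul p (hscale a q)) (hscale a (hmul p q)).
Proof.
move=> w; rewrite coef_hscale !coef_hmul mulr_sumr; apply: eq_bigr => t _.
by rewrite big_map !mulr_sumr; apply: eq_bigr => s _ /=; ring.
Qed.

Lemma hmul_assoc p q r : hmul (hmul p q) r = hmul p (hmul q r).
Proof.
elim: p => [|t p IH] //; rewrite -cat1s !hmul_add_l IH; congr hadd.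
rewrite /hmul allpairs_mapl map_allpairs.
by apply: eq_allpairs => s v /=; rewrite mulrA catA.
Qed.

Lemma hmul_nil_r p : hmul p [::] = [::].
Proof. by elim: p. Qed.

Lemma hmul_hword u v : hmul (hword u) (hword v) = hword (u ++ v).
Proof. by rewrite /hword /hmul /= mulr1. Qed.

Lemma hmul_hword_l u v p : hmul (hword u) (hmul (hword v) p) = hmul (hword (u ++ v)) p.
Proof. by rewrite -hmul_assoc hmul_hword. Qed.

Lemma hscale_add a p q : hscale a (hadd p q) = hadd (hscale a p) (hscale a q).
Proof. exact: map_cat. Qed.

Lemma hscale_scale a b p : hscale a (hscale b p) = hscale (a * b) p.
Proof. by rewrite /hscale -map_comp; apply: eq_map => t /=; rewrite mulrA. Qed.

Record linear_op (A : op) : Prop := LinearOp {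
  lin_proper : Proper (heq ==> heq) A;
  lin_add : forall p q, heq (A (hadd p q)) (hadd (A p) (A q));
  lin_scale : forall a p, heq (A (hscale a p)) (hscale a (A p)) }.

Lemma linear_linext f : linear_op (linext f).
Proof.
split; first exact: linext_proper.
  by move=> p q; rewrite /hadd /linext map_cat flatten_cat.
move=> a p w; rewrite coef_hscale !coef_linext /hscale big_map mulr_sumr.
by apply: eq_bigr => t _ /=; rewrite mulrA.
Qed.

Lemma linear_theta c : linear_op (theta c).
Proof. exact: linear_linext. Qed.

Lemma linear_d1 : linear_op d1.
Proof. exact: linear_linext. Qed.

Lemma linear_Rmul q : linear_op (Rmul q).
Proof.
split=> [p p' pp' | p p' | a p]; rewrite /Rmul ?hmul_add_l ?hmul_scale_l //.
by rewrite pp'.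
Qed.

Lemma linear_opid : linear_op opid.
Proof. by split=> // p q. Qed.

Lemma linear_opcomp A B : linear_op A -> linear_op B -> linear_op (opcomp A B).
Proof.
move=> [PA addA scaleA] [PB addB scaleB]; split=> [p q pq | p q | a p]; rewrite /opcomp.
- by rewrite pq.
- by rewrite addB addA.
- by rewrite scaleB scaleA.
Qed.

Lemma linear_opadd A B : linear_op A -> linear_op B -> linear_op (opadd A B).
Proof.
move=> [PA addA scaleA] [PB addB scaleB]; split=> [p q pq | p q | a p]; rewrite /opadd.
- by rewrite pq.
- by rewrite addA addB => w; rewrite !coef_hadd; ring.
- by rewrite scaleA scaleB hscale_add.
Qed.

Lemma linear_opscale k A : linear_op A -> linear_op (opscale k A).
Proof.
move=> [PA addA scaleA]; split=> [p q pq | p q | a p]; rewrite /opscale.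
- by rewrite pq.
- by rewrite addA hscale_add.
- by rewrite scaleA !hscale_scale mulrC.
Qed.

Lemma linear_opsub A B : linear_op A -> linear_op B -> linear_op (opsub A B).
Proof. by move=> LA LB; exact: (linear_opadd _ _ LA (linear_opscale (-1) _ LB)). Qed.

Lemma linear_opbr A B : linear_op A -> linear_op B -> linear_op (opbr A B).
Proof. by move=> LA LB; apply: linear_opsub; apply: linear_opcomp. Qed.

Create HintDb linear_ops.
#[export] Hint Resolve linear_theta linear_d1 linear_Rmul linear_opid linear_opcomp
  linear_opadd linear_opscale linear_opsub linear_opbr : linear_ops.

Lemma linear_words_ext A B : linear_op A -> linear_op B ->
  (forall u, heq (A (hword u)) (B (hword u))) -> opeq A B.
Proof.
have expand C p : linear_op C -> heq (C (linext hword p)) (linext (fun u => C (hword u)) p).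
  case=> PC addC scaleC; elim: p => [|t p IH].
    rewrite -[linext _ [::]]/(hscale 0 [::]) scaleC => w.
    by rewrite coef_hscale mul0r coef_hnil.
  by rewrite -[linext _ (t :: p)]/(hadd (hscale t.1 (hword t.2)) (linext hword p)) addC scaleC IH.
move=> LA LB AB p; have [PA _ _] := LA; have [PB _ _] := LB.
by rewrite (hQ_as_sum p) !expand //; apply: linext_ext.
Qed.

Ltac hnorm :=
  repeat first
    [ progress rewrite ?hmul_assoc ?hmul_hword_l ?hmul_hword ?hscale_add ?hscale_scale
    | rewrite hmul_add_l | rewrite hmul_scale_l
    | setoid_rewrite hmul_add_r | setoid_rewrite hmul_scale_r ];
  repeat progress rewrite -?catA ?cat_cons ?cat0s.

Ltac hcoef := let w := fresh "w" in
  move=> w; rewrite ?(coef_hadd, coef_hscale, coef_hnil); ring.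

Lemma Hw_hword u : Hw u = hscale (size u)%:R (hword u).
Proof. by rewrite /Hw /hscale /hword /= mulr1. Qed.

Lemma d1letter_hword b : d1letter b = hscale (if b then -1 else 1) (hword [:: lx; ly]).
Proof. by case: b; rewrite /hscale /hword /= mulr1. Qed.

Lemma thw_cons c b u :
  thw c (b :: u) = hadd (hmul (thletter b) (hword u))
    (hadd (hmul (hword [:: b]) (thw c u)) (hscale c (hmul (d1letter b) (Hw u)))).
Proof. by []. Qed.

Lemma d1w_cons b u :
  d1w (b :: u) = hadd (hmul (d1letter b) (hword u)) (hmul (hword [:: b]) (d1w u)).
Proof. by []. Qed.

(* The commutation rule on words:
   theta(u a) = theta(u) a + 1/2 (u a z + u z a) + c d1(u) a,
   by induction on u; the extra c d1(b) u a produced by the degree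
   factor H(u a) = (|u| + 1) u a is what the term c d1(b u) a absorbs. *)
Lemma thw_snoc c u a :
  heq (thw c (u ++ [:: a]))
    (hadd (hmul (thw c u) (hword [:: a]))
      (hadd (hscale (2%:R)^-1 (hadd (hmul (hword (u ++ [:: a])) hz)
                                    (hmul (hmul (hword u) hz) (hword [:: a]))))
            (hscale c (hmul (d1w u) (hword [:: a]))))).
Proof.
elim: u => [|b u IH].
  rewrite cat0s thw_cons [thw c [::]]/= [d1w [::]]/= /thletter /hz Hw_hword [size _]/=.
  by rewrite d1letter_hword hmul_nil_r; hnorm; hcoef.
rewrite cat_cons !thw_cons d1w_cons; setoid_rewrite IH.
rewrite /thletter /hz !Hw_hword !d1letter_hword size_cat addn1.
by hnorm; hcoef.
Qed.

Lemma theta_Rmul_letter c a :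
  opeq (opcomp (theta c) (Rmul (hword [:: a])))
       (opadd (opcomp (Rmul (hword [:: a])) (theta c))
          (opadd (opscale (2%:R)^-1 (opadd (opcomp (Rmul hz) (Rmul (hword [:: a])))
                                           (opcomp (Rmul (hword [:: a])) (Rmul hz))))
                 (opscale c (opcomp (Rmul (hword [:: a])) d1)))).
Proof.
apply: linear_words_ext; [by auto with linear_ops | by auto 10 with linear_ops |].
move=> u; rewrite /opcomp /opadd /opscale /Rmul /theta /d1 hmul_hword !linext_hword.
exact: thw_snoc.
Qed.

Definition phi_step (c : rat) (A : op) : op :=
  opadd (opbr (theta c) A)
    (opadd (opscale (2%:R)^-1 (opadd (opcomp (Rmul hz) A) (opcomp A (Rmul hz))))
           (opscale c (opcomp d1 A))).

Lemma phi_succ c n : phi c n.+1 = opscale (n.+1%:R)^-1 (phi_step c (phi c n)).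
Proof. by []. Qed.

Lemma linear_phi c n : linear_op (phi c n).
Proof.
elim: n => [|n IH]; first exact: linear_opid.
by rewrite phi_succ /phi_step; auto 10 with linear_ops.
Qed.

(* Conjugation A |-> R_b A R_a, so that psi_(n+1) = sandwich x y phi_n. *)
Definition sandwich (a b : letter) (A : op) : op :=
  opcomp (Rmul (hword [:: b])) (opcomp A (Rmul (hword [:: a]))).

Lemma sandwich_scale a b k A p :
  sandwich a b (opscale k A) p = hscale k (sandwich a b A p).
Proof. by rewrite /sandwich /opcomp /opscale /Rmul hmul_scale_l. Qed.

Definition psi_step (c : rat) (A : op) : op :=
  opsub (opbr (theta c) A)
    (opadd (opscale (2%:R)^-1 (opadd (opcomp (Rmul hz) A) (opcomp A (Rmul hz))))
           (opscale c (opcomp A d1))).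

(* Conjugation turns phi_step into psi_step: expanding theta(R_b A R_a p)
   and A(theta(p a)) with the commutation rule, the terms produced by
   moving theta past R_a and R_b are exactly the extra terms of psi_step. *)
Lemma sandwich_step c a b A : linear_op A ->
  opeq (sandwich a b (phi_step c A)) (psi_step c (sandwich a b A)).
Proof.
move=> [PA addA scaleA] p.
have theta_a := theta_Rmul_letter c a p.
have theta_b := theta_Rmul_letter c b (A (hmul p (hword [:: a]))).
rewrite /opcomp /opadd /opscale /Rmul in theta_a theta_b.
rewrite /sandwich /phi_step /psi_step /opbr /opsub /opadd /opscale /opcomp /Rmul /hsub.
setoid_rewrite theta_a; setoid_rewrite theta_b.
repeat first [setoid_rewrite addA | setoid_rewrite scaleA].
by rewrite !(hmul_add_l, hmul_scale_l); hcoef.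
Qed.

Theorem mainTheorem4 (c : rat) :
  opeq (psi c 1) (Rmul (hword [:: lx; ly])) /\
  (forall n : nat, (2 <= n)%N ->
    opeq (psi c n)
      (opscale (n.-1%:R)^-1
        (opsub (opbr (theta c) (psi c n.-1))
          (opadd (opscale (2%:R)^-1 (opadd (opcomp (Rmul hz) (psi c n.-1))
                                            (opcomp (psi c n.-1) (Rmul hz))))
                 (opscale c (opcomp (psi c n.-1) d1)))))).
Proof.
split=> [p | [|[|m]] // _ p].
  change (heq (hmul (hmul p (hword [:: lx])) (hword [:: ly])) (hmul p (hword [:: lx; ly]))).
  by rewrite hmul_assoc hmul_hword.
change (heq (sandwich lx ly (opscale (m.+1%:R)^-1 (phi_step c (phi c m))) p)
            (hscale (m.+1%:R)^-1 (psi_step c (sandwich lx ly (phi c m)) p))).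
rewrite sandwich_scale (sandwich_step c lx ly _ (linear_phi c m) p).
reflexivity.
Qed.
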